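(* In the isotropic setting below, for all $F\in\mathrm{GL}^+(3)$ and $C_p\in\mathrm{PSym}(3)$ one has $$\widetilde\Sigma\,C_p\in\mathrm{Sym}(3),\quad C_p^{-1}\widetilde\Sigma\in\mathrm{Sym}(3),\quad (\mathrm{dev}_3\widetilde\Sigma)\,C_p\in\mathrm{Sym}(3),\quad C_p^{-1}\mathrm{dev}_3\widetilde\Sigma\in\mathrm{Sym}(3).$$
   Context: $W$ objective and isotropic, written $W(F_e)=\Psi(I_1(C_e),I_2(C_e),I_3(C_e))$ with $\Psi$ of class $C^1$; $I_1=\mathrm{tr}$, $I_2(X)=\mathrm{tr}(\mathrm{Cof}X)$, $I_3=\det$; $\widetilde W(X)=\Psi(I_1(X),I_2(X),I_3(X))$. $C=F^TF$. $\langle X,Y\rangle=\mathrm{tr}(XY^T)$, $D$ the gradient w.r.t. it. $\widetilde\Sigma:=2\,C\,D\widetilde W(CC_p^{-1})\,C_p^{-1}$. $\mathrm{dev}_3X=X-\frac13\mathrm{tr}(X)\mathbb{1}$. $\mathrm{Sym}(3)$, $\mathrm{PSym}(3)$: symmetric, resp. symmetric positive definite $3\times3$ matrices. *)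

(* classical real numbers. 3x3 real matrices are represented as
   functions nat -> nat -> R, of which only the entries with indices 0,1,2 matter. *)
From Stdlib Require Import Reals Lra.
Open Scope R_scope.

Definition Mat := nat -> nat -> R.

Definition sum3 (f : nat -> R) : R := f 0%nat + f 1%nat + f 2%nat.

Definition mmul (A B : Mat) : Mat := fun i j => sum3 (fun k => A i k * B k j).
Definition madd (A B : Mat) : Mat := fun i j => A i j + B i j.
Definition mscale (a : R) (A : Mat) : Mat := fun i j => a * A i j.
Definition trans (A : Mat) : Mat := fun i j => A j i.
Definition Id3 : Mat := fun i j => if Nat.eqb i j then 1 else 0.
Definition tr (A : Mat) : R := sum3 (fun i => A i i).

Definition nx (i : nat) : nat := match i with 0%nat => 1%nat | 1%nat => 2%nat | _ => 0%nat end.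
Definition nn (i : nat) : nat := nx (nx i).

(* cofactor matrix Cof A (so that A (Cof A)^T = det A * 1) *)
Definition Cof (A : Mat) : Mat := fun i j =>
  A (nx i) (nx j) * A (nn i) (nn j) - A (nx i) (nn j) * A (nn i) (nx j).
Definition det3 (A : Mat) : R := sum3 (fun j => A 0%nat j * Cof A 0%nat j).
Definition inv3 (A : Mat) : Mat := mscale (/ det3 A) (trans (Cof A)).

Definition I1 (X : Mat) : R := tr X.
Definition I2 (X : Mat) : R := tr (Cof X).
Definition I3 (X : Mat) : R := det3 X.

Definition dev3 (X : Mat) : Mat := madd X (mscale (- (tr X / 3)) Id3).

Definition inner (X Y : Mat) : R := tr (mmul X (trans Y)).
Definition fnorm (X : Mat) : R := sqrt (inner X X).

Definition Sym3 (A : Mat) : Prop :=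
  forall i j, (i < 3)%nat -> (j < 3)%nat -> A i j = A j i.

Definition PSym3 (A : Mat) : Prop :=
  Sym3 A /\
  forall x : nat -> R, (exists i, (i < 3)%nat /\ x i <> 0) ->
    0 < sum3 (fun i => sum3 (fun j => x i * A i j * x j)).

Definition is_gradient (f : Mat -> R) (X G : Mat) : Prop :=
  forall eps, 0 < eps -> exists delta, 0 < delta /\
    forall H : Mat, fnorm H < delta ->
      Rabs (f (madd X H) - f X - inner G H) <= eps * fnorm H.

(* open positive orthant (0,oo)^3, the set of possible invariants of PSym(3) *)
Definition orthant (a b c : R) : Prop := 0 < a /\ 0 < b /\ 0 < c.

Definition cont3_at (g : R -> R -> R -> R) (a b c : R) : Prop :=
  forall eps, 0 < eps -> exists delta, 0 < delta /\
    forall x y z, Rabs (x - a) < delta -> Rabs (y - b) < delta -> Rabs (z - c) < delta ->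
      Rabs (g x y z - g a b c) < eps.

Definition C1_orthant (Psi : R -> R -> R -> R) : Prop :=
  exists d1 d2 d3 : R -> R -> R -> R,
    forall a b c, orthant a b c ->
      derivable_pt_lim (fun t => Psi t b c) a (d1 a b c) /\
      derivable_pt_lim (fun t => Psi a t c) b (d2 a b c) /\
      derivable_pt_lim (fun t => Psi a b t) c (d3 a b c) /\
      cont3_at d1 a b c /\ cont3_at d2 a b c /\ cont3_at d3 a b c.

From Stdlib Require Import Reals Lra Lia Setoid Morphisms Classical.
Open Scope R_scope.

(* Writing [DW(X) = d1 1 + d2 (tr X 1 - X^T) + d3 Cof X] with the partial derivatives
   [d_k] of [Psi] at the invariants of [X], the chain rule gives the gradient of the
   isotropic energy, provided [Psi] is differentiable there.  At [X = C Cp^-1] the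
   invariants are positive, since [C] and [Cp^-1] are positive definite, so the [C^1]
   hypothesis on the open orthant gives that differentiability.  With [P = Cp^-1] and
   [C], [P] symmetric, [C DW(C P)] is symmetric because [C (C P)^T = C P C] and
   [C Cof(C P) = det C Cof P].  Hence [Sigma Cp = 2 C DW] and [Cp^-1 Sigma = 2 P (C DW) P]
   are symmetric, and the deviatoric parts differ from these by multiples of [Cp]
   and [Cp^-1]. *)

(** * Entrywise matrix algebra *)

(* Matrices are functions on all of [nat]; gradients are only determined on the
   entries of index below 3, so identities between matrices are stated up to [eq3]. *)
Definition eq3 (A B : Mat) : Prop :=
  forall i j, (i < 3)%nat -> (j < 3)%nat -> A i j = B i j.

Ltac by_entries :=
  let i := fresh "i" in let j := fresh "j" in
  intros i j ? ?; destruct i as [|[|[|i]]]; try lia; destruct j as [|[|[|j]]]; try lia.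

Ltac unfold_mx :=
  unfold eq3, Sym3, inner, dev3, I1, I2, I3, inv3, det3, tr, Cof, mmul, madd, mscale,
    trans, Id3, sum3, nn, nx; simpl.

Ltac rewrite_eq3 :=
  repeat match goal with H : eq3 ?A ?B |- context [?A ?x ?y] => rewrite (H x y) by lia end.

Ltac lower_to_upper S HS :=
  rewrite ?(HS 1%nat 0%nat), ?(HS 2%nat 0%nat), ?(HS 2%nat 1%nat) by lia.

#[export] Instance eq3_Equivalence : Equivalence eq3.
Proof.
  split; unfold eq3.
  - now intros A.
  - intros A B HAB i j Hi Hj. now rewrite HAB.
  - intros A B C HAB HBC i j Hi Hj. now rewrite HAB, HBC.
Qed.

#[export] Instance mmul_Proper : Proper (eq3 ==> eq3 ==> eq3) mmul.
Proof. intros A A' HA B B' HB; by_entries; unfold_mx; rewrite_eq3; ring. Qed.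
#[export] Instance madd_Proper : Proper (eq3 ==> eq3 ==> eq3) madd.
Proof. intros A A' HA B B' HB; by_entries; unfold_mx; rewrite_eq3; ring. Qed.
#[export] Instance mscale_Proper : Proper (eq ==> eq3 ==> eq3) mscale.
Proof. intros a a' <- B B' HB; by_entries; unfold_mx; rewrite_eq3; ring. Qed.
#[export] Instance tr_Proper : Proper (eq3 ==> eq) tr.
Proof. intros B B' HB; unfold_mx; rewrite_eq3; ring. Qed.
#[export] Instance dev3_Proper : Proper (eq3 ==> eq3) dev3.
Proof. intros B B' HB. unfold dev3. now rewrite HB. Qed.
#[export] Instance Sym3_Proper : Proper (eq3 ==> iff) Sym3.
Proof.
  intros B B' HB; unfold Sym3; split; intros HS i j Hi Hj.
  - rewrite <- !HB by lia; auto.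
  - rewrite !HB by lia; auto.
Qed.

Lemma mmulA A B C : eq3 (mmul (mmul A B) C) (mmul A (mmul B C)).
Proof. by_entries; unfold_mx; ring. Qed.
Lemma mmul1l A : eq3 (mmul Id3 A) A.
Proof. by_entries; unfold_mx; ring. Qed.
Lemma mmul1r A : eq3 (mmul A Id3) A.
Proof. by_entries; unfold_mx; ring. Qed.
Lemma mmulDl A B C : eq3 (mmul (madd A B) C) (madd (mmul A C) (mmul B C)).
Proof. by_entries; unfold_mx; ring. Qed.
Lemma mmulDr A B C : eq3 (mmul C (madd A B)) (madd (mmul C A) (mmul C B)).
Proof. by_entries; unfold_mx; ring. Qed.
Lemma mmulZl k A B : eq3 (mmul (mscale k A) B) (mscale k (mmul A B)).
Proof. by_entries; unfold_mx; ring. Qed.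
Lemma mmulZr k A B : eq3 (mmul A (mscale k B)) (mscale k (mmul A B)).
Proof. by_entries; unfold_mx; ring. Qed.
Lemma trZ k A : tr (mscale k A) = k * tr A.
Proof. unfold_mx; ring. Qed.
Lemma det3M A B : det3 (mmul A B) = det3 A * det3 B.
Proof. unfold_mx; ring. Qed.
Lemma det3_trans A : det3 (trans A) = det3 A.
Proof. unfold_mx; ring. Qed.
Lemma det3_Cof A : det3 (Cof A) = det3 A ^ 2.
Proof. unfold_mx; ring. Qed.
Lemma CofM A B : eq3 (Cof (mmul A B)) (mmul (Cof A) (Cof B)).
Proof. by_entries; unfold_mx; ring. Qed.
Lemma Cof_trans A : eq3 (Cof (trans A)) (trans (Cof A)).
Proof. by_entries; unfold_mx; ring. Qed.
Lemma mmul_inv3l A : det3 A <> 0 -> eq3 (mmul (inv3 A) A) Id3.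
Proof. intro H; by_entries; unfold_mx; field; unfold_mx; auto. Qed.
Lemma det3_inv3 A : det3 A <> 0 -> det3 (inv3 A) = / det3 A.
Proof. intro H. unfold inv3. revert H. unfold_mx. intro H. field; auto. Qed.
Lemma Cof_inv3 A : det3 A <> 0 -> eq3 (Cof (inv3 A)) (mscale (/ det3 A) (trans A)).
Proof. intro H; by_entries; unfold_mx; field; unfold_mx; auto. Qed.

Lemma trans_Sym3 A : Sym3 A -> eq3 (trans A) A.
Proof. unfold Sym3, eq3, trans; intros HA i j Hi Hj; symmetry; auto. Qed.
Lemma Sym3_madd A B : Sym3 A -> Sym3 B -> Sym3 (madd A B).
Proof. unfold Sym3, madd; intros HA HB i j Hi Hj; now rewrite HA, HB. Qed.
Lemma Sym3_mscale k A : Sym3 A -> Sym3 (mscale k A).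
Proof. unfold Sym3, mscale; intros HA i j Hi Hj; now rewrite HA. Qed.
Lemma Sym3_gram F : Sym3 (mmul (trans F) F).
Proof. by_entries; unfold_mx; ring. Qed.
Lemma Sym3_conj P S : Sym3 P -> Sym3 S -> Sym3 (mmul P (mmul S P)).
Proof. intros HP HS; by_entries; unfold_mx; lower_to_upper P HP; lower_to_upper S HS; ring. Qed.
Lemma Sym3_inv3 A : Sym3 A -> Sym3 (inv3 A).
Proof. intro HA; by_entries; unfold_mx; lower_to_upper A HA; ring. Qed.

(** * Symmetry of the stress *)

Definition grad_I2 (X : Mat) : Mat := madd (mscale (tr X) Id3) (mscale (-1) (trans X)).

Definition isotropic_grad (a b c : R) (X : Mat) : Mat :=
  madd (mscale a Id3) (madd (mscale b (grad_I2 X)) (mscale c (Cof X))).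

Lemma Sym3_mmul_isotropic_grad a b c C P :
  Sym3 C -> Sym3 P -> Sym3 (mmul C (isotropic_grad a b c (mmul C P))).
Proof.
  intros HC HP. unfold isotropic_grad, grad_I2.
  by_entries; unfold_mx; lower_to_upper C HC; lower_to_upper P HP; ring.
Qed.

Lemma Sym3_mmul_dev3l A B : Sym3 (mmul A B) -> Sym3 B -> Sym3 (mmul (dev3 A) B).
Proof.
  intros HAB HB. unfold dev3. rewrite mmulDl, mmulZl, mmul1l.
  now apply Sym3_madd, Sym3_mscale.
Qed.

Lemma Sym3_mmul_dev3r A B : Sym3 (mmul B A) -> Sym3 B -> Sym3 (mmul B (dev3 A)).
Proof.
  intros HBA HB. unfold dev3. rewrite mmulDr, mmulZr, mmul1r.
  now apply Sym3_madd, Sym3_mscale.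
Qed.

Lemma Sym3_stress S P Cp : Sym3 S -> Sym3 P -> Sym3 Cp -> eq3 (mmul P Cp) Id3 ->
  let Sigma := mscale 2 (mmul S P) in
  Sym3 (mmul Sigma Cp) /\ Sym3 (mmul P Sigma) /\
  Sym3 (mmul (dev3 Sigma) Cp) /\ Sym3 (mmul P (dev3 Sigma)).
Proof.
  intros HS HP HCp HPCp Sigma.
  assert (HSigmaCp : Sym3 (mmul Sigma Cp)).
  { unfold Sigma. rewrite mmulZl, mmulA, HPCp, mmul1r. now apply Sym3_mscale. }
  assert (HPSigma : Sym3 (mmul P Sigma)).
  { unfold Sigma. rewrite mmulZr, <- mmulA, mmulA. now apply Sym3_mscale, Sym3_conj. }
  repeat split; auto using Sym3_mmul_dev3l, Sym3_mmul_dev3r.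
Qed.

(** * Positive definiteness *)

Definition qform (Q : Mat) (x : nat -> R) : R :=
  sum3 (fun i => sum3 (fun j => x i * Q i j * x j)).

Definition nonzero3 (x : nat -> R) : Prop := exists i, (i < 3)%nat /\ x i <> 0.

Definition posdef (Q : Mat) : Prop := forall x, nonzero3 x -> 0 < qform Q x.

Lemma nonzero3_or_zero x : nonzero3 x \/ (x 0%nat = 0 /\ x 1%nat = 0 /\ x 2%nat = 0).
Proof.
  destruct (classic (nonzero3 x)) as [Hx|Hx]; [now left|right].
  repeat split; apply NNPP; intro Hxi; apply Hx; eexists; (split; [|exact Hxi]); lia.
Qed.

Lemma qform_ge0 Q x : posdef Q -> 0 <= qform Q x.
Proof.
  intro HQ. destruct (nonzero3_or_zero x) as [Hx|[H0 [H1 H2]]].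
  - now apply Rlt_le, HQ.
  - unfold qform, sum3. rewrite H0, H1, H2. lra.
Qed.

(* The form at [e0], at [(C01, -C00, 0)] and at the last row of [Cof Cp] equals
   [C00], [C00 m] and [det Cp m], where [m] is the leading 2x2 minor. *)
Lemma det3_gt0 Cp : Sym3 Cp -> posdef Cp -> 0 < det3 Cp.
Proof.
  intros HS HP.
  set (m := Cp 0%nat 0%nat * Cp 1%nat 1%nat - Cp 0%nat 1%nat * Cp 0%nat 1%nat).
  set (e0 := fun i => if Nat.eqb i 0 then 1 else 0).
  set (u := fun i => match i with 0%nat => Cp 0%nat 1%nat | 1%nat => - Cp 0%nat 0%nat | _ => 0 end).
  set (w := fun j => Cof Cp 2%nat j).
  assert (Hqe0 : qform Cp e0 = Cp 0%nat 0%nat) by (unfold qform, e0; unfold_mx; ring).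
  assert (Hqu : qform Cp u = Cp 0%nat 0%nat * m)
    by (unfold qform, u, m; unfold_mx; lower_to_upper Cp HS; ring).
  assert (Hqw : qform Cp w = det3 Cp * m)
    by (unfold qform, w, m; unfold_mx; lower_to_upper Cp HS; ring).
  assert (H00 : 0 < Cp 0%nat 0%nat).
  { rewrite <- Hqe0. apply HP. exists 0%nat. split; [lia|unfold e0; simpl; lra]. }
  assert (Hm : 0 < Cp 0%nat 0%nat * m).
  { rewrite <- Hqu. apply HP. exists 1%nat. split; [lia|unfold u; simpl; lra]. }
  assert (Hdm : 0 < det3 Cp * m).
  { rewrite <- Hqw. apply HP. exists 2%nat. split; [lia|unfold w; unfold_mx].
    lower_to_upper Cp HS. unfold m in Hm. nra. }
  nra.
Qed.

(* [q_{Cp^-1}(x) = q_{Cp}(Cp^-1 x)], and [Cp^-1 x] vanishes only with [x]. *)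
Lemma posdef_inv3 Cp : Sym3 Cp -> posdef Cp -> posdef (inv3 Cp).
Proof.
  intros HS HP x Hx.
  assert (Hd : det3 Cp <> 0) by (apply Rgt_not_eq, det3_gt0; auto).
  set (y := fun i => sum3 (fun j => inv3 Cp i j * x j)).
  assert (Hqy : qform (inv3 Cp) x = qform Cp y).
  { revert Hd. unfold qform, y; unfold_mx. lower_to_upper Cp HS. intro Hd. field; auto. }
  assert (Hxy : forall i, (i < 3)%nat -> x i = sum3 (fun j => Cp i j * y j)).
  { intros i Hi. destruct i as [|[|[|i]]]; try lia;
      revert Hd; unfold y; unfold_mx; lower_to_upper Cp HS; intro Hd; field; auto. }
  rewrite Hqy. apply HP.
  destruct (nonzero3_or_zero y) as [Hy|[H0 [H1 H2]]]; auto.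
  destruct Hx as [i [Hi Hxi]]. exfalso. apply Hxi.
  rewrite Hxy by auto. unfold sum3. rewrite H0, H1, H2. ring.
Qed.

Lemma tr_gram_mmul A Q :
  Sym3 Q -> tr (mmul (mmul (trans A) A) Q) = sum3 (fun i => qform Q (fun j => A i j)).
Proof. intro HQ. unfold qform. unfold_mx. lower_to_upper Q HQ. ring. Qed.

Lemma sum3_qform_rows_gt0 Q A :
  posdef Q -> det3 A <> 0 -> 0 < sum3 (fun i => qform Q (fun j => A i j)).
Proof.
  intros HQ HA. unfold sum3.
  pose proof (qform_ge0 Q (fun j => A 0%nat j) HQ) as Q0.
  pose proof (qform_ge0 Q (fun j => A 1%nat j) HQ) as Q1.
  pose proof (qform_ge0 Q (fun j => A 2%nat j) HQ) as Q2.
  destruct (nonzero3_or_zero (fun j => A 0%nat j)) as [R0|Z0];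
    [pose proof (HQ _ R0); lra|].
  destruct (nonzero3_or_zero (fun j => A 1%nat j)) as [R1|Z1];
    [pose proof (HQ _ R1); lra|].
  destruct (nonzero3_or_zero (fun j => A 2%nat j)) as [R2|Z2];
    [pose proof (HQ _ R2); lra|].
  exfalso. apply HA. cbv beta in Z0, Z1, Z2. unfold_mx.
  destruct Z0 as (-> & -> & ->), Z1 as (-> & -> & ->), Z2 as (-> & -> & ->). ring.
Qed.

Lemma orthant_invariants F Cp : 0 < det3 F -> Sym3 Cp -> posdef Cp ->
  let X := mmul (mmul (trans F) F) (inv3 Cp) in orthant (I1 X) (I2 X) (I3 X).
Proof.
  intros HF HS HP X.
  assert (Hd : 0 < det3 Cp) by (apply det3_gt0; auto).
  repeat split.
  - unfold X, I1. rewrite tr_gram_mmul by (now apply Sym3_inv3).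
    apply sum3_qform_rows_gt0; [now apply posdef_inv3|lra].
  - unfold X, I2. rewrite !CofM, Cof_trans, Cof_inv3, (trans_Sym3 Cp HS) by lra.
    rewrite mmulZr, trZ, tr_gram_mmul by auto.
    apply Rmult_lt_0_compat; [now apply Rinv_0_lt_compat|].
    apply sum3_qform_rows_gt0; [auto|]. rewrite det3_Cof. nra.
  - unfold X, I3. rewrite !det3M, det3_trans, det3_inv3 by lra.
    apply Rmult_lt_0_compat; [nra|]. now apply Rinv_0_lt_compat.
Qed.

(** * Gradients *)

Definition Ecell (i j : nat) (t : R) : Mat :=
  fun a b => if Nat.eqb a i then if Nat.eqb b j then t else 0 else 0.

Lemma inner_Ecell G i j t : (i < 3)%nat -> (j < 3)%nat -> inner G (Ecell i j t) = G i j * t.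
Proof.
  intros Hi Hj. destruct i as [|[|[|i]]]; try lia; destruct j as [|[|[|j]]]; try lia;
    unfold Ecell; unfold_mx; ring.
Qed.

Lemma fnorm_Ecell i j t : (i < 3)%nat -> (j < 3)%nat -> fnorm (Ecell i j t) = Rabs t.
Proof.
  intros Hi Hj. unfold fnorm. rewrite inner_Ecell by auto.
  unfold Ecell. rewrite !Nat.eqb_refl. apply sqrt_Rsqr_abs.
Qed.

(* Testing both gradients on [t E_ij] bounds [|G1_ij - G2_ij| t] by [2 eps t] for every [eps > 0]. *)
Lemma is_gradient_unique f X G1 G2 : is_gradient f X G1 -> is_gradient f X G2 -> eq3 G1 G2.
Proof.
  intros H1 H2 i j Hi Hj. apply NNPP; intro Hne.
  set (d := G1 i j - G2 i j).
  assert (Hd : 0 < Rabs d) by (apply Rabs_pos_lt; unfold d; lra).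
  destruct (H1 (Rabs d / 4) ltac:(lra)) as [d1 [Hd1 P1]].
  destruct (H2 (Rabs d / 4) ltac:(lra)) as [d2 [Hd2 P2]].
  set (t := Rmin d1 d2 / 2).
  assert (Hm : 0 < Rmin d1 d2) by (now apply Rmin_glb_lt).
  assert (Hn : fnorm (Ecell i j t) = t) by (rewrite fnorm_Ecell by auto; apply Rabs_right; unfold t; lra).
  specialize (P1 (Ecell i j t)). specialize (P2 (Ecell i j t)).
  rewrite Hn, inner_Ecell in P1, P2 by auto.
  specialize (P1 ltac:(pose proof (Rmin_l d1 d2); unfold t; lra)).
  specialize (P2 ltac:(pose proof (Rmin_r d1 d2); unfold t; lra)).
  assert (Hdt : Rabs (d * t) <= Rabs d / 2 * t).
  { replace (d * t) with ((f (madd X (Ecell i j t)) - f X - G2 i j * t) -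
                          (f (madd X (Ecell i j t)) - f X - G1 i j * t)) by (unfold d; ring).
    eapply Rle_trans; [apply Rabs_triang|]. rewrite Rabs_Ropp. lra. }
  rewrite Rabs_mult, (Rabs_right t) in Hdt by (unfold t; lra).
  assert (0 < t) by (unfold t; lra). nra.
Qed.

(** * Expansions of the invariants *)

Definition mabs (A : Mat) : R := sum3 (fun i => sum3 (fun j => Rabs (A i j))).

Lemma sum3_le f g : (forall i, (i < 3)%nat -> f i <= g i) -> sum3 f <= sum3 g.
Proof.
  intro Hfg. unfold sum3.
  pose proof (Hfg 0%nat ltac:(lia)); pose proof (Hfg 1%nat ltac:(lia)); pose proof (Hfg 2%nat ltac:(lia)).
  lra.
Qed.

Lemma Rabs_triang3 a b c : Rabs (a + b + c) <= Rabs a + Rabs b + Rabs c.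
Proof. eapply Rle_trans; [apply Rabs_triang|]. pose proof (Rabs_triang a b). lra. Qed.

Lemma Rabs_sum3_le f : Rabs (sum3 f) <= sum3 (fun i => Rabs (f i)).
Proof. apply Rabs_triang3. Qed.

Lemma mabs_ge0 A : 0 <= mabs A.
Proof.
  apply Rle_trans with (sum3 (fun _ => sum3 (fun _ => 0))); [unfold sum3; lra|].
  apply sum3_le; intros; apply sum3_le; intros; apply Rabs_pos.
Qed.

Lemma Rabs_entry_le_fnorm H i j : (i < 3)%nat -> (j < 3)%nat -> Rabs (H i j) <= fnorm H.
Proof.
  intros Hi Hj. rewrite <- sqrt_Rsqr_abs. unfold fnorm. apply sqrt_le_1_alt.
  unfold Rsqr. destruct i as [|[|[|i]]]; try lia; destruct j as [|[|[|j]]]; try lia;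
    unfold_mx; nra.
Qed.

Lemma Rabs_inner_le A B m :
  (forall i j, (i < 3)%nat -> (j < 3)%nat -> Rabs (B i j) <= m) ->
  Rabs (inner A B) <= mabs A * m.
Proof.
  intro HB.
  assert (E : inner A B = sum3 (fun i => sum3 (fun j => A i j * B i j))) by (unfold_mx; ring).
  assert (Em : mabs A * m = sum3 (fun i => sum3 (fun j => Rabs (A i j) * m)))
    by (unfold mabs, sum3; ring).
  rewrite E, Em. eapply Rle_trans; [apply Rabs_sum3_le|].
  apply sum3_le; intros i Hi. eapply Rle_trans; [apply Rabs_sum3_le|].
  apply sum3_le; intros j Hj. rewrite Rabs_mult.
  apply Rmult_le_compat_l; [apply Rabs_pos|auto].
Qed.

Lemma Rabs_Cof_le H i j :
  (i < 3)%nat -> (j < 3)%nat -> Rabs (Cof H i j) <= 2 * fnorm H ^ 2.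
Proof.
  intros Hi Hj.
  assert (Hnx : forall k, (k < 3)%nat -> (nx k < 3)%nat) by (intros [|[|[|k]]]; simpl; lia).
  assert (Hentry : forall k l, (k < 3)%nat -> (l < 3)%nat -> Rabs (H k l) <= fnorm H)
    by (intros; now apply Rabs_entry_le_fnorm).
  assert (Hprod : forall k l k' l', (k < 3)%nat -> (l < 3)%nat -> (k' < 3)%nat -> (l' < 3)%nat ->
            Rabs (H k l * H k' l') <= fnorm H ^ 2).
  { intros. rewrite Rabs_mult.
    replace (fnorm H ^ 2) with (fnorm H * fnorm H) by ring.
    apply Rmult_le_compat; auto using Rabs_pos. }
  unfold Cof, nn. eapply Rle_trans; [apply Rabs_triang|]. rewrite Rabs_Ropp.
  pose proof (Hprod (nx i) (nx j) (nx (nx i)) (nx (nx j))).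
  pose proof (Hprod (nx i) (nx (nx j)) (nx (nx i)) (nx j)).
  repeat match goal with P : (?k < 3)%nat -> _ |- _ => specialize (P ltac:(auto)) end.
  lra.
Qed.

Lemma Rabs_I2_le H : Rabs (I2 H) <= 6 * fnorm H ^ 2.
Proof.
  unfold I2, tr. eapply Rle_trans; [apply Rabs_sum3_le|].
  replace (6 * fnorm H ^ 2) with (sum3 (fun _ => 2 * fnorm H ^ 2)) by (unfold sum3; ring).
  apply sum3_le; intros i Hi. now apply Rabs_Cof_le.
Qed.

Lemma Rabs_det3_le H : Rabs (det3 H) <= 6 * fnorm H ^ 3.
Proof.
  unfold det3. eapply Rle_trans; [apply Rabs_sum3_le|].
  replace (6 * fnorm H ^ 3) with (sum3 (fun _ => fnorm H * (2 * fnorm H ^ 2)))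
    by (unfold sum3; ring).
  apply sum3_le; intros j Hj. rewrite Rabs_mult.
  apply Rmult_le_compat; auto using Rabs_pos, Rabs_entry_le_fnorm, Rabs_Cof_le.
Qed.

Definition quad_expansion (f : Mat -> R) (X G : Mat) : Prop :=
  exists K, 0 <= K /\ forall H, fnorm H <= 1 ->
    Rabs (f (madd X H) - f X - inner G H) <= K * fnorm H ^ 2.

Lemma quad_expansion_lipschitz f X G : quad_expansion f X G ->
  exists L, 0 <= L /\ forall H, fnorm H <= 1 -> Rabs (f (madd X H) - f X) <= L * fnorm H.
Proof.
  intros [K [HK HfG]]. exists (mabs G + K). split; [pose proof (mabs_ge0 G); lra|].
  intros H Hn. pose proof (HfG H Hn) as Hr.
  assert (Hn0 : 0 <= fnorm H) by apply sqrt_pos.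
  assert (Hi : Rabs (inner G H) <= mabs G * fnorm H)
    by (apply Rabs_inner_le; intros; now apply Rabs_entry_le_fnorm).
  replace (f (madd X H) - f X) with ((f (madd X H) - f X - inner G H) + inner G H) by ring.
  eapply Rle_trans; [apply Rabs_triang|].
  assert (K * fnorm H ^ 2 <= K * fnorm H) by (apply Rmult_le_compat_l; nra).
  lra.
Qed.

Lemma I1_expansion X : quad_expansion I1 X Id3.
Proof.
  exists 0. split; [lra|]. intros H _.
  replace (I1 (madd X H) - I1 X - inner Id3 H) with 0 by (unfold_mx; ring).
  rewrite Rabs_R0. nra.
Qed.

Lemma I2_expansion X : quad_expansion I2 X (grad_I2 X).
Proof.
  exists 6. split; [lra|]. intros H _.
  replace (I2 (madd X H) - I2 X - inner (grad_I2 X) H) with (I2 H)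
    by (unfold grad_I2; unfold_mx; ring).
  apply Rabs_I2_le.
Qed.

Lemma I3_expansion X : quad_expansion I3 X (Cof X).
Proof.
  exists (2 * mabs X + 6). split; [pose proof (mabs_ge0 X); lra|]. intros H Hn.
  assert (Hn0 : 0 <= fnorm H) by apply sqrt_pos.
  replace (I3 (madd X H) - I3 X - inner (Cof X) H) with (inner X (Cof H) + det3 H)
    by (unfold_mx; ring).
  assert (HX : Rabs (inner X (Cof H)) <= mabs X * (2 * fnorm H ^ 2))
    by (apply Rabs_inner_le; intros; now apply Rabs_Cof_le).
  pose proof (Rabs_det3_le H).
  assert (fnorm H ^ 3 <= fnorm H ^ 2) by nra.
  eapply Rle_trans; [apply Rabs_triang|]. nra.
Qed.

(** * Differentiability of [Psi] and the chain rule *)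

Definition differentiable3_at (Psi : R -> R -> R -> R) (a b c d1 d2 d3 : R) : Prop :=
  forall eps, 0 < eps -> exists delta, 0 < delta /\
    forall x y z, Rabs (x - a) < delta -> Rabs (y - b) < delta -> Rabs (z - c) < delta ->
      Rabs (Psi x y z - Psi a b c - (d1 * (x - a) + d2 * (y - b) + d3 * (z - c)))
        <= eps * (Rabs (x - a) + Rabs (y - b) + Rabs (z - c)).

Lemma Rabs_between u w t : Rmin u w <= t <= Rmax u w -> Rabs (t - u) <= Rabs (w - u).
Proof.
  unfold Rmin, Rmax. destruct (Rle_dec u w); intros Ht; unfold Rabs;
    repeat destruct Rcase_abs; lra.
Qed.

Lemma mvt_affine_le (g g' : R -> R) u w l eps :
  (forall t, Rmin u w <= t <= Rmax u w ->
     derivable_pt_lim g t (g' t) /\ Rabs (g' t - l) <= eps) ->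
  Rabs (g w - g u - l * (w - u)) <= eps * Rabs (w - u).
Proof.
  intro Hg.
  destruct (MVT_abs (fun t => g t - l * t) (fun t => g' t - l) u w) as [t [E Ht]].
  { intros t Ht. replace (g' t - l) with (g' t - l * 1) by ring.
    apply (derivable_pt_lim_minus g (mult_real_fct l id)); [apply Hg, Ht|].
    apply derivable_pt_lim_scal, derivable_pt_lim_id. }
  replace (g w - g u - l * (w - u)) with (g w - l * w - (g u - l * u)) by ring.
  rewrite E. apply Rmult_le_compat_r; [apply Rabs_pos|apply Hg, Ht].
Qed.

Lemma Rlt_Rmin v p q : v < Rmin p q -> v < p /\ v < q.
Proof. apply Rmin_Rgt_l. Qed.

Lemma pos_of_near x a : Rabs (x - a) < a -> 0 < x.
Proof. intro H. apply Rabs_def2 in H. lra. Qed.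

Ltac split_Rmin :=
  repeat match goal with H : _ < Rmin _ _ |- _ =>
    let H1 := fresh H in let H2 := fresh H in
    destruct (Rlt_Rmin _ _ _ H) as [H1 H2]; clear H end.

(* Moving one coordinate at a time, each increment is controlled by the mean value
   theorem and the continuity of the corresponding partial derivative. *)
Lemma differentiable3_of_partials (Psi d1 d2 d3 : R -> R -> R -> R) a b c :
  (forall x y z, orthant x y z ->
     derivable_pt_lim (fun t => Psi t y z) x (d1 x y z) /\
     derivable_pt_lim (fun t => Psi x t z) y (d2 x y z) /\
     derivable_pt_lim (fun t => Psi x y t) z (d3 x y z)) ->
  cont3_at d1 a b c -> cont3_at d2 a b c -> cont3_at d3 a b c ->
  orthant a b c -> differentiable3_at Psi a b c (d1 a b c) (d2 a b c) (d3 a b c).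
Proof.
  intros Hder C1 C2 C3 [Ha [Hb Hc]] eps Heps.
  destruct (C1 eps Heps) as [e1 [He1 K1]].
  destruct (C2 eps Heps) as [e2 [He2 K2]].
  destruct (C3 eps Heps) as [e3 [He3 K3]].
  set (delta := Rmin (Rmin e1 e2) (Rmin e3 (Rmin a (Rmin b c)))).
  exists delta. split; [unfold delta; repeat apply Rmin_glb_lt; lra|].
  assert (Hnear : forall x y z,
    Rabs (x - a) < delta -> Rabs (y - b) < delta -> Rabs (z - c) < delta ->
    orthant x y z /\ Rabs (d1 x y z - d1 a b c) <= eps /\
    Rabs (d2 x y z - d2 a b c) <= eps /\ Rabs (d3 x y z - d3 a b c) <= eps).
  { intros x y z Hx Hy Hz. unfold delta in Hx, Hy, Hz. split_Rmin.
    repeat split; [apply (pos_of_near x a)|apply (pos_of_near y b)|apply (pos_of_near z c)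
                  |apply Rlt_le, K1|apply Rlt_le, K2|apply Rlt_le, K3]; auto. }
  assert (Hcc : forall r, Rabs (r - r) < delta)
    by (intro r; rewrite Rminus_diag, Rabs_R0; unfold delta; repeat apply Rmin_glb_lt; lra).
  intros x y z Hx Hy Hz.
  assert (P3 := mvt_affine_le (fun t => Psi x y t) (d3 x y) c z (d3 a b c) eps).
  assert (P2 := mvt_affine_le (fun t => Psi x t c) (fun t => d2 x t c) b y (d2 a b c) eps).
  assert (P1 := mvt_affine_le (fun t => Psi t b c) (fun t => d1 t b c) a x (d1 a b c) eps).
  cbv beta in P1, P2, P3.
  specialize (P3 ltac:(intros t Ht; pose proof (Rabs_between _ _ _ Ht);
    destruct (Hnear x y t) as [Ho Hd]; try lra; split; [apply Hder|]; tauto)).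
  specialize (P2 ltac:(intros t Ht; pose proof (Rabs_between _ _ _ Ht);
    destruct (Hnear x t c) as [Ho Hd]; try lra; auto; split; [apply Hder|]; tauto)).
  specialize (P1 ltac:(intros t Ht; pose proof (Rabs_between _ _ _ Ht);
    destruct (Hnear t b c) as [Ho Hd]; try lra; auto; split; [apply Hder|]; tauto)).
  replace (Psi x y z - Psi a b c - (d1 a b c * (x - a) + d2 a b c * (y - b) + d3 a b c * (z - c)))
    with ((Psi x y z - Psi x y c - d3 a b c * (z - c)) + (Psi x y c - Psi x b c - d2 a b c * (y - b))
          + (Psi x b c - Psi a b c - d1 a b c * (x - a))) by ring.
  eapply Rle_trans; [apply Rabs_triang3|]. lra.
Qed.

Lemma inner_lincomb3 d1 d2 d3 G1 G2 G3 H :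
  inner (madd (mscale d1 G1) (madd (mscale d2 G2) (mscale d3 G3))) H
  = d1 * inner G1 H + d2 * inner G2 H + d3 * inner G3 H.
Proof. unfold_mx; ring. Qed.

Lemma lt_div_mul a b c : 0 < c -> a < b / c -> a * c < b.
Proof.
  intros Hc Habc. replace b with (b / c * c) by (field; lra).
  now apply Rmult_lt_compat_r.
Qed.

Lemma Rabs_linear3_perturb e r p d1 d2 d3 v1 v2 v3 g1 g2 g3 :
  Rabs (p - (d1 * v1 + d2 * v2 + d3 * v3)) <= e * (Rabs v1 + Rabs v2 + Rabs v3) ->
  Rabs (v1 - g1) <= r -> Rabs (v2 - g2) <= r -> Rabs (v3 - g3) <= r ->
  Rabs (p - (d1 * g1 + d2 * g2 + d3 * g3))
    <= e * (Rabs v1 + Rabs v2 + Rabs v3) + (Rabs d1 + Rabs d2 + Rabs d3) * r.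
Proof.
  intros Hp H1 H2 H3.
  replace (p - (d1 * g1 + d2 * g2 + d3 * g3)) with ((p - (d1 * v1 + d2 * v2 + d3 * v3))
    + (d1 * (v1 - g1) + d2 * (v2 - g2) + d3 * (v3 - g3))) by ring.
  eapply Rle_trans; [apply Rabs_triang|]. apply Rplus_le_compat; [exact Hp|].
  eapply Rle_trans; [apply Rabs_triang3|]. rewrite !Rabs_mult.
  pose proof (Rmult_le_compat_l _ _ _ (Rabs_pos d1) H1).
  pose proof (Rmult_le_compat_l _ _ _ (Rabs_pos d2) H2).
  pose proof (Rmult_le_compat_l _ _ _ (Rabs_pos d3) H3).
  lra.
Qed.

Lemma is_gradient_chain3 (Psi : R -> R -> R -> R) (f1 f2 f3 : Mat -> R) X G1 G2 G3 d1 d2 d3 :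
  differentiable3_at Psi (f1 X) (f2 X) (f3 X) d1 d2 d3 ->
  quad_expansion f1 X G1 -> quad_expansion f2 X G2 -> quad_expansion f3 X G3 ->
  is_gradient (fun Y => Psi (f1 Y) (f2 Y) (f3 Y)) X
    (madd (mscale d1 G1) (madd (mscale d2 G2) (mscale d3 G3))).
Proof.
  intros HPsi Q1 Q2 Q3 eps Heps.
  destruct (quad_expansion_lipschitz _ _ _ Q1) as [L1 [HL1 Lip1]].
  destruct (quad_expansion_lipschitz _ _ _ Q2) as [L2 [HL2 Lip2]].
  destruct (quad_expansion_lipschitz _ _ _ Q3) as [L3 [HL3 Lip3]].
  destruct Q1 as [K1 [HK1 E1]], Q2 as [K2 [HK2 E2]], Q3 as [K3 [HK3 E3]].
  set (L := L1 + L2 + L3). set (K := K1 + K2 + K3).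
  set (D := Rabs d1 + Rabs d2 + Rabs d3).
  assert (HD : 0 <= D) by (unfold D; pose proof (Rabs_pos d1);
    pose proof (Rabs_pos d2); pose proof (Rabs_pos d3); lra).
  assert (HL : 0 <= L) by (unfold L; lra). assert (HK : 0 <= K) by (unfold K; lra).
  set (e := eps / (2 * (L + 1))).
  destruct (HPsi e) as [dP [HdP HP]]; [apply Rdiv_lt_0_compat; lra|].
  exists (Rmin 1 (Rmin (dP / (L + 1)) (eps / (2 * (D * K + 1))))).
  split; [repeat apply Rmin_glb_lt; try lra; apply Rdiv_lt_0_compat; nra|].
  intros H Hn. apply Rlt_Rmin in Hn as [Hn1 Hn]. apply Rlt_Rmin in Hn as [HndP Hneps].
  apply Rlt_le in Hn1.
  specialize (Lip1 H Hn1). specialize (Lip2 H Hn1). specialize (Lip3 H Hn1).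
  specialize (E1 H Hn1). specialize (E2 H Hn1). specialize (E3 H Hn1).
  set (n := fnorm H) in *.
  assert (Hn0 : 0 <= n) by apply sqrt_pos.
  apply lt_div_mul in HndP; [|lra]. apply lt_div_mul in Hneps; [|nra].
  assert (Hv : Rabs (f1 (madd X H) - f1 X) + Rabs (f2 (madd X H) - f2 X)
               + Rabs (f3 (madd X H) - f3 X) <= L * n) by (unfold L; lra).
  pose proof (Rabs_pos (f1 (madd X H) - f1 X)). pose proof (Rabs_pos (f2 (madd X H) - f2 X)).
  pose proof (Rabs_pos (f3 (madd X H) - f3 X)).
  specialize (HP (f1 (madd X H)) (f2 (madd X H)) (f3 (madd X H))
                 ltac:(nra) ltac:(nra) ltac:(nra)).
  assert (Hlin : e * (L * n) <= eps * n / 2).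
  { apply Rle_trans with (e * ((L + 1) * n)).
    - apply Rmult_le_compat_l; [apply Rlt_le, Rdiv_lt_0_compat|]; nra.
    - right. unfold e. field. lra. }
  assert (Hquad : D * (K * n ^ 2) <= eps * n / 2) by nra.
  rewrite inner_lincomb3.
  eapply Rle_trans; [apply (Rabs_linear3_perturb e (K * n ^ 2)); [exact HP|..]|].
  - eapply Rle_trans; [exact E1|]. apply Rmult_le_compat_r; [nra|unfold K; lra].
  - eapply Rle_trans; [exact E2|]. apply Rmult_le_compat_r; [nra|unfold K; lra].
  - eapply Rle_trans; [exact E3|]. apply Rmult_le_compat_r; [nra|unfold K; lra].
  - assert (e * (Rabs (f1 (madd X H) - f1 X) + Rabs (f2 (madd X H) - f2 X)
                 + Rabs (f3 (madd X H) - f3 X)) <= e * (L * n))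
      by (apply Rmult_le_compat_l; [apply Rlt_le, Rdiv_lt_0_compat|]; lra).
    fold D. lra.
Qed.

Theorem mainTheorem7 (Psi : R -> R -> R -> R) (hPsi : C1_orthant Psi)
  (F Cp : Mat) (hF : 0 < det3 F) (hCp : PSym3 Cp) :
  let Wt := fun X : Mat => Psi (I1 X) (I2 X) (I3 X) in
  let C := mmul (trans F) F in
  let X0 := mmul C (inv3 Cp) in
  (exists G, is_gradient Wt X0 G) /\
  forall G, is_gradient Wt X0 G ->
    let Sigma := mscale 2 (mmul (mmul C G) (inv3 Cp)) in
    Sym3 (mmul Sigma Cp) /\ Sym3 (mmul (inv3 Cp) Sigma) /\
    Sym3 (mmul (dev3 Sigma) Cp) /\ Sym3 (mmul (inv3 Cp) (dev3 Sigma)).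
Proof.
  intros Wt C X0.
  destruct hPsi as [d1 [d2 [d3 Hd]]]. destruct hCp as [HS HP].
  assert (Ho : orthant (I1 X0) (I2 X0) (I3 X0)) by now apply orthant_invariants.
  set (G0 := isotropic_grad (d1 (I1 X0) (I2 X0) (I3 X0)) (d2 (I1 X0) (I2 X0) (I3 X0))
                            (d3 (I1 X0) (I2 X0) (I3 X0)) X0).
  assert (HG0 : is_gradient Wt X0 G0).
  { apply (is_gradient_chain3 Psi I1 I2 I3);
      [|apply I1_expansion|apply I2_expansion|apply I3_expansion].
    destruct (Hd _ _ _ Ho) as [_ [_ [_ [C1 [C2 C3]]]]].
    apply differentiable3_of_partials; auto.
    intros x y z Hxyz. destruct (Hd x y z Hxyz). tauto. }
  split; [now exists G0|].
  intros G HG. cbv zeta.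
  rewrite (is_gradient_unique _ _ _ _ HG HG0).
  apply Sym3_stress; auto using Sym3_inv3.
  - apply Sym3_mmul_isotropic_grad; [apply Sym3_gram|now apply Sym3_inv3].
  - apply mmul_inv3l. pose proof (det3_gt0 Cp HS HP). lra.
Qed.
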